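(* Let $e$ be an idempotent binary relation on a finite set $Q$ (i.e. $e\circ e=e$), let $S=\{s\in Q\mid (s,s)\in e\}$ be its set of fixed points, and let $\Gamma$ be the set of strongly connected components of the restriction of $e$ to $S$ (viewed as a directed graph). Then: (1) for all $p,q\in Q$, $(p,q)\in e$ if and only if there exists $s\in S$ with $(p,s)\in e$ and $(s,q)\in e$; (2) $e=\ell r$, where $\ell=\{(p,\sigma)\in Q\times\Gamma\mid (p,s)\in e\text{ for some }s\in\sigma\}$ and $r=\{(\sigma,q)\in\Gamma\times Q\mid (s,q)\in e\text{ for some }s\in\sigma\}$.
   Context: Relations are composed as follows: for relations $m\subseteq X\times Y$, $n\subseteq Y\times Z$, $mn=\{(x,z)\mid \exists y,\ (x,y)\in m,\ (y,z)\in n\}$. *)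

From mathcomp Require Import all_boot.
Set Implicit Arguments. Unset Strict Implicit. Unset Printing Implicit Defensive.

Definition relcomp (X Y Z : Type) (m : X -> Y -> Prop) (n : Y -> Z -> Prop)
  (x : X) (z : Z) : Prop := exists y, m x y /\ n y z.

Section Idem.
Variable Q : finType.
Variable e : rel Q.

Definition idempotent_rel : Prop :=
  forall p q, relcomp e e p q <-> e p q.

Definition fixpts : {set Q} := [set s | e s s].

Definition erestr : rel Q := [rel x y | [&& x \in fixpts, y \in fixpts & e x y]].

Definition scc (s : Q) : {set Q} :=
  [set t in fixpts | connect erestr s t && connect erestr t s].

Definition sccs : {set {set Q}} := [set scc s | s in fixpts].

Definition lrel (p : Q) (sigma : {set Q}) : Prop :=
  sigma \in sccs /\ exists2 s, s \in sigma & e p s.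
Definition rrel (sigma : {set Q}) (q : Q) : Prop :=
  sigma \in sccs /\ exists2 s, s \in sigma & e s q.
End Idem.

From mathcomp Require Import all_boot.

(* An idempotent relation e (e e = e) is transitive (e e <= e) and dense
   (e <= e e); these two properties are all the argument uses.
   (1) Given e p q, among the midpoints s of p and q (e p s, e s q) choose one
       with the fewest e-predecessors.  Density yields t with e p t and e t s;
       t is again a midpoint whose predecessors lie among those of s, so by
       minimality both predecessor sets coincide; as t precedes s, t precedes
       itself, i.e. t is a fixed point.
   (2) Within the graph of e restricted to the fixed points, a path starting
       at a fixed point x gives e x y by transitivity; hence e relates any two
       members of a strongly connected component.  Thus l r <= e, while the
       fixed midpoint s of (1) shows e <= l r through the component of s. *)

Section TransitiveDense.

Variable Q : finType.
Variable e : rel Q.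

Hypothesis e_trans : transitive e.
Hypothesis e_dense : forall {p q}, e p q -> exists s, e p s && e s q.

Lemma fixpt_midpoint p q :
  e p q -> exists2 s, s \in fixpts e & e p s && e s q.
Proof.
move=> Epq; have [s0 mid_s0] := e_dense Epq.
pose midpoint := [pred s | e p s && e s q].
pose preds s := [set u | e u s].
have [s /andP [Eps Esq] s_min] :=
  arg_minnP (P := midpoint) (fun s => #|preds s|) mid_s0.
have [t /andP [Ept Ets]] := e_dense Eps.
have mid_t : midpoint t by rewrite inE Ept (e_trans _ _ _ Ets Esq).
have sub_ts : preds t \subset preds s.
  by apply/subsetP => u; rewrite !inE => Eut; exact: e_trans _ _ _ Eut Ets.
have preds_ts : preds t = preds s.
  by apply/eqP; rewrite eqEcard sub_ts s_min.
exists t => //.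
have : t \in preds s by rewrite inE.
by rewrite -preds_ts !inE.
Qed.

Lemma connect_erestr {x y} :
  x \in fixpts e -> connect (erestr e) x y -> e x y.
Proof.
move=> Fx /connectP [path Hpath ->] {y}.
elim: path x Fx Hpath => [|z path IH] x Fx /=; first by rewrite inE in Fx.
by move=> /andP [/and3P [_ Fz Exz] Hpath]; apply: e_trans _ _ _ Exz (IH z Fz Hpath).
Qed.

Lemma scc_complete {sigma s1 s2} :
  sigma \in sccs e -> s1 \in sigma -> s2 \in sigma -> e s1 s2.
Proof.
move=> /imsetP [s0 _ ->] /setIdP [F1 /andP [_ C10]] /setIdP [_ /andP [C02 _]].
exact: connect_erestr F1 (connect_trans C10 C02).
Qed.

Lemma scc_self {s} : s \in fixpts e -> s \in scc e s /\ scc e s \in sccs e.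
Proof. by move=> Fs; rewrite inE Fs !connect0; split=> //; apply: imset_f. Qed.

Lemma factor_through_sccs p q : e p q <-> relcomp (lrel e) (rrel e) p q.
Proof.
split.
  move=> /fixpt_midpoint [s Fs /andP [Eps Esq]].
  have [s_scc scc_in] := scc_self Fs.
  by exists (scc e s); split; split=> //; exists s.
move=> [sigma [[Gsigma [s1 S1 Eps1]] [_ [s2 S2 Es2q]]]].
exact: e_trans _ _ _ Eps1 (e_trans _ _ _ (scc_complete Gsigma S1 S2) Es2q).
Qed.

End TransitiveDense.

Theorem mainTheorem6 (Q : finType) (e : rel Q) :
  idempotent_rel e ->
  (forall p q : Q, e p q <-> exists2 s, s \in fixpts e & e p s && e s q) /\
  (forall p q : Q, e p q <-> relcomp (lrel e) (rrel e) p q).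
Proof.
move=> e_idem.
have e_trans : transitive e by move=> y x z Exy Eyz; apply/e_idem; exists y.
have e_dense p q : e p q -> exists s, e p s && e s q.
  by move/e_idem => [s [Eps Esq]]; exists s; rewrite Eps Esq.
split=> p q; last exact: factor_through_sccs.
split; first exact: fixpt_midpoint.
by move=> [s _ /andP [Eps Esq]]; apply: e_trans _ _ _ Eps Esq.
Qed.
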